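(* For every $n\in\mathbb{N}$ there exists a strongly $n$-connected $2n$-regular oriented graph on $16n+1$ vertices with no Hamilton cycle.
   Context: An oriented graph has at most one edge between any two vertices; $d$-regular means every vertex has in- and outdegree exactly $d$. Strongly $n$-connected means that the digraph has more than $n$ vertices and remains strongly connected after deleting any set of fewer than $n$ vertices. A Hamilton cycle is a directed cycle through all vertices. *)

From mathcomp Require Import all_boot.
Set Implicit Arguments. Unset Strict Implicit. Unset Printing Implicit Defensive.

Definition oriented (T : finType) (e : rel T) : Prop :=
  (forall x, ~~ e x x) /\ (forall x y, e x y -> ~~ e y x).

Definition outdeg (T : finType) (e : rel T) (x : T) : nat := #|[set y | e x y]|.
Definition indeg (T : finType) (e : rel T) (x : T) : nat := #|[set y | e y x]|.

Definition regular (T : finType) (e : rel T) (d : nat) : Prop :=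
  forall x, outdeg e x = d /\ indeg e x = d.

Definition delete_rel (T : finType) (e : rel T) (S : {set T}) : rel T :=
  [rel x y | [&& e x y, x \notin S & y \notin S]].

Definition strongly_connected_minus (T : finType) (e : rel T) (S : {set T}) : Prop :=
  forall x y, x \notin S -> y \notin S -> connect (delete_rel e S) x y.

Definition strongly_k_connected (T : finType) (e : rel T) (n : nat) : Prop :=
  n < #|T| /\ forall S : {set T}, #|S| < n -> strongly_connected_minus e S.

Definition hamiltonian (T : finType) (e : rel T) : Prop :=
  exists c : seq T, [/\ uniq c, forall x, x \in c & cycle e c].

From mathcomp Require Import all_boot zify.
Set Implicit Arguments. Unset Strict Implicit. Unset Printing Implicit Defensive.

(* The graph has a hub A = A_0 + A_1 of 4n vertices, sets B_0, B_1 of 2n - 1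
   vertices with all arcs A_s -> B_s -> A_(1-s), an apex with all arcs
   A_0 -> apex -> A_1, and two near-regular circulants on Z_(4n+1), each joined
   to the hub by n entry and n exit arcs.  Every arc touches the hub except the
   arcs inside a circulant, so a Hamilton cycle must enter each vertex of B, the
   apex and both circulants from distinct hub vertices: 4n + 1 > 4n.  Deleting
   fewer than n vertices spares one vertex in every family of n alternative
   routes, which connects every vertex to and from the hub. *)

Lemma card_set_sum (T1 T2 : finType) (P : pred (T1 + T2)) :
  #|[set x | P x]| = #|[set x | P (inl x)]| + #|[set x | P (inr x)]|.
Proof.
rewrite -!sum1_card (big_sumType _ (fun x => x \in [set x | P x])).
by congr (_ + _); apply: eq_bigl => x; rewrite !inE.
Qed.

Lemma card_set_pair_bool (T : finType) (P : pred (bool * T)) :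
  #|[set x | P x]| = #|[set x | P (true, x)]| + #|[set x | P (false, x)]|.
Proof.
rewrite -!sum1_card (eq_bigl (fun p => xpredT p.1 && P (p.1, p.2))); last first.
  by case=> b x; rewrite inE.
rewrite -(pair_big_dep xpredT (fun b x => P (b, x)) (fun _ _ => 1)) big_bool /=.
by congr (_ + _); apply: eq_bigl => x; rewrite !inE.
Qed.

Lemma card_set_unit (P : pred unit) : #|[set x | P x]| = P tt.
Proof.
rewrite -sum1_card big_mkcond (big_pred1 tt) ?inE; [by case: (P tt) | by case].
Qed.

Lemma card_ord_eq_val_add k c d : #|[set j : 'I_k | c == j + d]| = (d <= c < k + d).
Proof.
case: (boolP (d <= c < k + d)) => [/andP[dc ck] | out] /=.
  have cdk : c - d < k by lia.
  rewrite -(cards1 (Ordinal cdk)).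
  by apply: eq_card => j; rewrite !inE -val_eqE /=; apply/eqP/eqP; lia.
apply/eqP; rewrite cards_eq0; apply/eqP/setP => j; rewrite !inE.
by apply/negbTE; apply: contra out => /eqP->; have := ltn_ord j; lia.
Qed.

Lemma card_ord_eq_val k (c : nat) : #|[set j : 'I_k | c == j]| = (c < k).
Proof.
have := card_ord_eq_val_add k c 0; rewrite addn0 => <-.
by apply: eq_card => j; rewrite !inE addn0.
Qed.

Lemma card_ord_val_eq k (c : nat) : #|[set j : 'I_k | val j == c]| = (c < k).
Proof. by rewrite -card_ord_eq_val; apply: eq_card => j; rewrite !inE eq_sym. Qed.

Lemma card_ord_interval m k : k < m -> #|[set j : 'I_m | 0 < j <= k]| = k.
Proof.
move=> km; pose f (j : 'I_k) : 'I_m := Ordinal (leq_ltn_trans (ltn_ord j) km).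
rewrite -[RHS]card_ord -(card_imset _ (_ : injective f)); last first.
  by move=> i j /(congr1 val) /= [] /val_inj.
apply: eq_card => j; rewrite inE; apply/idP/imsetP => [jk | [i _ ->]] /=.
  have j1k : j.-1 < k by lia.
  by exists (Ordinal j1k) => //; apply: val_inj => /=; lia.
exact: ltn_ord.
Qed.

Section Pigeonhole.
Variables (T : finType) (S : {set T}).

Lemma exists_notin (I : finType) (f : I -> T) :
  injective f -> #|S| < #|I| -> exists i, f i \notin S.
Proof.
move=> f_inj SI; apply/existsP; apply: contraLR SI.
rewrite negb_exists -leqNgt => /forallP fS; rewrite -cardsT -(card_imset _ f_inj).
by apply/subset_leq_card/subsetP => _ /imsetP[i _ ->]; rewrite -[_ \in _]negbK fS.
Qed.

Lemma exists_notin2 (I : finType) (f g : I -> T) :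
  injective f -> injective g -> (forall i j, f i != g j) -> #|S| < #|I| ->
  exists i, (f i \notin S) && (g i \notin S).
Proof.
move=> f_inj g_inj fg SI; apply/existsP; apply: contraLR SI.
rewrite negb_exists -leqNgt => /forallP fgS.
pose h i := if f i \in S then f i else g i.
have h_inj : injective h.
  move=> i j; rewrite /h; case: (f i \in S); case: (f j \in S) => hij.
  - exact: f_inj.
  - by have := fg i j; rewrite hij eqxx.
  - by have := fg j i; rewrite hij eqxx.
  - exact: g_inj.
rewrite -cardsT -(card_imset _ h_inj); apply/subset_leq_card/subsetP => _ /imsetP[i _ ->].
by rewrite /h; case: ifP => // fiS; move: (fgS i); rewrite fiS negbK.
Qed.

End Pigeonhole.

Lemma connect1_delete (T : finType) (e : rel T) (S : {set T}) x y :
  e x y -> x \notin S -> y \notin S -> connect (delete_rel e S) x y.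
Proof. by move=> exy xS yS; apply/connect1/and3P. Qed.

Section CircularDistance.
Variable m : nat.
Implicit Types x y z : 'I_m.

Definition cdist x y : nat := if x <= y then y - x else y + m - x.

Lemma cdist_lt x y : cdist x y < m.
Proof. by rewrite /cdist; have := ltn_ord x; have := ltn_ord y; case: (leqP x y); lia. Qed.

Lemma cdist_eq0 x y : (cdist x y == 0) = (x == y).
Proof.
rewrite -val_eqE /= /cdist; have := ltn_ord x; have := ltn_ord y.
by case: (leqP x y) => *; apply/eqP/eqP; lia.
Qed.

Lemma cdist_add x y : x != y -> cdist x y + cdist y x = m.
Proof.
rewrite -val_eqE /= /cdist => /eqP xy; have := ltn_ord x; have := ltn_ord y.
by case: (leqP x y); case: (leqP y x) => *; lia.
Qed.

Lemma cdist_sub x y z : cdist x z <= cdist x y -> cdist z y = cdist x y - cdist x z.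
Proof.
rewrite /cdist; have := ltn_ord x; have := ltn_ord y; have := ltn_ord z.
by case: (leqP x y); case: (leqP x z); case: (leqP z y) => *; lia.
Qed.

Definition cdist_ord x y : 'I_m := Ordinal (cdist_lt x y).

Lemma cdist_ord_inj x : injective (cdist_ord x).
Proof.
move=> y z /(congr1 val); rewrite /= /cdist => yz; apply: val_inj => /=.
move: yz (ltn_ord x) (ltn_ord y) (ltn_ord z).
by case: (leqP x y); case: (leqP x z) => *; lia.
Qed.

Lemma cdist_ord_inj_l y : injective (cdist_ord ^~ y).
Proof.
move=> x z /(congr1 val); rewrite /= /cdist => xz; apply: val_inj => /=.
move: xz (ltn_ord x) (ltn_ord y) (ltn_ord z).
by case: (leqP x y); case: (leqP z y) => *; lia.
Qed.

Lemma card_cdist (P : pred nat) x : #|[set y | P (cdist x y)]| = #|[set j : 'I_m | P j]|.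
Proof.
rewrite -(card_preimset [set j : 'I_m | P j] (@cdist_ord_inj x)).
by apply: eq_card => y; rewrite !inE.
Qed.

Lemma card_cdist_l (P : pred nat) y : #|[set x | P (cdist x y)]| = #|[set j : 'I_m | P j]|.
Proof.
rewrite -(card_preimset [set j : 'I_m | P j] (@cdist_ord_inj_l y)).
by apply: eq_card => x; rewrite !inE.
Qed.

Lemma connect_circulant (T : finType) (e : rel T) (S : {set T}) k (f : 'I_m -> T) :
  injective f -> #|S| < k -> (forall x y, 0 < cdist x y <= k -> e (f x) (f y)) ->
  forall x y, f x \notin S -> f y \notin S -> connect (delete_rel e S) (f x) (f y).
Proof.
(* Hop to a surviving vertex among x + 1, ..., x + k, which is closer to y. *)
move=> f_inj Sk ef x y; have [d] := ubnP (cdist x y); elim: d x => // d IH x xyd xS yS.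
have [xyk | kxy] := leqP (cdist x y) k.
  have [<- | xy] := eqVneq x y; first exact: connect0.
  by apply: connect1_delete => //; apply: ef; rewrite xyk andbT lt0n cdist_eq0.
have km : k < m := ltn_trans kxy (cdist_lt x y).
pose z (j : 'I_k) := invF (@cdist_ord_inj x) (Ordinal (leq_ltn_trans (ltn_ord j) km)).
have xz j : cdist x (z j) = j.+1 by rewrite -[cdist _ _]/(val (cdist_ord x _)) f_invF.
have [j zS] : exists j, f (z j) \notin S.
  apply: exists_notin; last by rewrite card_ord.
  by move=> i j /f_inj /(congr1 (cdist x)); rewrite !xz => -[/val_inj].
have xzk : 0 < cdist x (z j) <= k by rewrite xz; exact: ltn_ord.
apply: connect_trans (connect1_delete (ef _ _ xzk) xS zS) (IH _ _ zS yS).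
by rewrite (@cdist_sub x) xz; have := ltn_ord j; lia.
Qed.

End CircularDistance.

Section Relabel.
Variables (T W : finType) (f : W -> T) (e : rel T).
Hypothesis f_bij : bijective f.

Lemma oriented_relpre : oriented e -> oriented (relpre f e).
Proof. by case=> irr asym; split=> [x | x y]; [exact: irr | exact: asym]. Qed.

Lemma regular_relpre d : regular e d -> regular (relpre f e) d.
Proof.
move=> reg w; have [out_d in_d] := reg (f w).
split; [rewrite -out_d | rewrite -in_d]; rewrite /outdeg /indeg.
  by rewrite -(on_card_preimset (onW_bij _ f_bij)); apply: eq_card => y; rewrite !inE.
by rewrite -(on_card_preimset (onW_bij _ f_bij)); apply: eq_card => y; rewrite !inE.
Qed.

Lemma connect_relpre (r : rel T) x y : connect r (f x) (f y) -> connect (relpre f r) x y.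
Proof.
case: f_bij => g fK gK /connectP[p r_p y_p]; apply/connectP; exists (map g p).
  by rewrite -path_map -map_comp (eq_map gK) map_id.
by apply: (bij_inj f_bij); rewrite -{1}(fK x) last_map gK -y_p.
Qed.

Lemma strongly_k_connected_relpre k :
  strongly_k_connected e k -> strongly_k_connected (relpre f e) k.
Proof.
case=> kT conn; split=> [|S Sk x y xS yS]; first by rewrite (bij_eq_card f_bij).
have f_inj := bij_inj f_bij.
have fSk : #|f @: S| < k by rewrite card_imset.
move: (conn _ fSk (f x) (f y)); rewrite !mem_imset // => /(_ xS yS) /connect_relpre.
rewrite (@eq_connect _ _ (delete_rel (relpre f e) S)) // => u v.
by rewrite /delete_rel /= !mem_imset.
Qed.

Lemma hamiltonian_relpre : hamiltonian (relpre f e) -> hamiltonian e.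
Proof.
case=> c [c_uniq c_all c_cycle]; case: f_bij => g _ gK.
exists (map f c); split; last by rewrite cycle_map.
  by rewrite (map_inj_uniq (bij_inj f_bij)).
by move=> x; rewrite -(gK x) map_f.
Qed.

End Relabel.

Lemma connect_cross (T : finType) (e : rel T) (P : pred T) x y :
  connect e x y -> ~~ P x -> P y -> exists u v, [/\ e u v, ~~ P u & P v].
Proof.
move=> /connectP[p]; elim: p x => [|z p IH] x /=; first by move=> _ -> /negbTE->.
move=> /andP[exz zp] y_p Px Py; have [Pz | nPz] := boolP (P z).
  by exists x, z.
exact: IH zp y_p nPz Py.
Qed.

(* Along the cycle each class is entered from H, through the injective successor map. *)
Lemma hamiltonian_card_classes (H R K : finType) (e : rel (H + R)) (cls : R -> K) :
  (forall r r', e (inr r) (inr r') -> cls r = cls r') -> (forall k, exists r, cls r = k) ->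
  0 < #|H| -> hamiltonian e -> #|K| <= #|H|.
Proof.
move=> e_cls cls_onto /card_gt0P[h0 _] [c [c_uniq c_all c_cycle]].
pose succ_class (h : H) := if next c (inl h) is inr r then Some (cls r) else None.
rewrite -cardsT -(card_imset _ Some_inj) -[#|H|]cardsT.
apply: leq_trans (leq_imset_card succ_class _); apply/subset_leq_card/subsetP.
move=> _ /imsetP[k _ ->]; have [r <-] := cls_onto k.
pose P (u : H + R) := if u is inr r' then cls r' == cls r else false.
have [u [v [/eqP <- Pu Pv]]] : exists u v, [/\ next c u == v, ~~ P u & P v].
  apply: (@connect_cross _ _ P (inl h0) (inr r)); rewrite /= ?eqxx //.
  by rewrite (fconnect_cycle (cycle_next c_uniq) (c_all _)).
case: u Pu Pv (next_cycle c_cycle (c_all u)) => [h _ Pv _ | r' Pu] /=.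
  apply/imsetP; exists h => //.
  by rewrite /succ_class; case: (next c _) Pv => // r'' /eqP ->.
case: (next c _) => // r'' /eqP Pv /e_cls cls_r'.
by rewrite /= cls_r' Pv eqxx in Pu.
Qed.

Section Construction.
Variable n : nat.

Definition hub := (bool * (bool * 'I_n))%type.
Definition bridge := (bool * 'I_(2 * n).-1)%type.
Definition cyc := (bool * 'I_(4 * n).+1)%type.
Definition vertex := (hub + (bridge + (cyc + unit)))%type.

(* The arcs x -> x + 2n with x < n are missing; the hub links make up for them. *)
Definition circ_arc (x y : 'I_(4 * n).+1) : bool :=
  (0 < cdist x y <= 2 * n) && ~~ ((x < n) && (cdist x y == 2 * n)).

(* inl (s, (t, j)) is vertex j of half t of A_s (reading false as 0),
   inr (inl (s, i)) lies in B_s, inr (inr (inl (t, x))) is vertex x of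
   circulant t, and inr (inr (inr tt)) is the apex.  Circulant t exits from
   x < n to half t of A_0 and is entered at 2n <= x < 3n from half t of A_1. *)
Definition edge : rel vertex := fun u w =>
  match u, w with
  | inl (s, _), inr (inl (s', _)) => s == s'
  | inr (inl (s, _)), inl (s', _) => s != s'
  | inl (false, _), inr (inr (inr _)) => true
  | inr (inr (inr _)), inl (true, _) => true
  | inl (true, (t, j)), inr (inr (inl (t', x))) => (t == t') && (val x == j + 2 * n)
  | inr (inr (inl (t, x))), inl (false, (t', j)) => (t == t') && (val x == j)
  | inr (inr (inl (t, x))), inr (inr (inl (t', y))) => (t == t') && circ_arc x y
  | _, _ => false
  end.

Lemma card_vertex : 0 < n -> #|{: vertex}| = 16 * n + 1.
Proof. by move=> n_gt0; rewrite !card_sum !card_prod card_unit card_bool !card_ord; lia. Qed.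

Lemma circ_arc_asym x y : circ_arc x y -> ~~ circ_arc y x.
Proof.
move=> /andP[/andP[xy_gt0 xy_le] _]; apply/negP => /andP[/andP[_ yx_le] _].
have : x != y by rewrite -cdist_eq0 -lt0n.
by move/cdist_add; lia.
Qed.

Lemma edge_oriented : oriented edge.
Proof.
split.
  case=> [[[] [t j]] | [[[] i] | [[t x] | []]]] //=.
  by rewrite /circ_arc /cdist leqnn subnn andbF.
case=> [[[] [t j]] | [[[] i] | [[t x] | []]]] [[[] [t' j']] | [[[] i'] | [[t' y] | []]]] //=.
by case/andP=> _ /circ_arc_asym/negbTE->; rewrite andbF.
Qed.

Lemma card_circ_arc_out x : #|[set y | circ_arc x y]| = 2 * n - (x < n).
Proof.
rewrite -(card_ord_interval (_ : 2 * n - (x < n) < (4 * n).+1)); last by lia.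
rewrite -(card_cdist (fun d => 0 < d <= 2 * n - (x < n)) x).
by apply: eq_card => y; rewrite !inE /circ_arc; case: (x < n) => /=; apply/idP/idP; lia.
Qed.

Lemma card_circ_arc_in x : #|[set y | circ_arc y x]| = 2 * n - (2 * n <= x < 3 * n).
Proof.
rewrite -(card_ord_interval (_ : 2 * n - (2 * n <= x < 3 * n) < (4 * n).+1)); last by lia.
rewrite -(card_cdist_l (fun d => 0 < d <= 2 * n - (2 * n <= x < 3 * n)) x).
apply: eq_card => y; rewrite !inE /circ_arc /cdist.
by have := ltn_ord x; have := ltn_ord y; case: (leqP y x) => *; apply/idP/idP; lia.
Qed.

Lemma edge_regular : 0 < n -> regular edge (2 * n).
Proof.
move=> n_gt0 u; rewrite /outdeg /indeg !card_set_sum !card_set_pair_bool !card_set_unit.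
case: u => [[[] [[] j]] | [[[] i] | [[[] x] | []]]] /=.
all: rewrite ?cards0 ?cardsT ?card_ord ?card_ord_val_eq ?card_ord_eq_val ?card_ord_eq_val_add.
all: rewrite ?card_circ_arc_out ?card_circ_arc_in.
all: (try have := ltn_ord j); split; lia.
Qed.

Lemma cyc_exit_subproof (j : 'I_n) : j < (4 * n).+1.
Proof. by have := ltn_ord j; lia. Qed.

Lemma cyc_entry_subproof (j : 'I_n) : j + 2 * n < (4 * n).+1.
Proof. by have := ltn_ord j; lia. Qed.

Definition cyc_exit j := Ordinal (cyc_exit_subproof j).
Definition cyc_entry j := Ordinal (cyc_entry_subproof j).

Lemma circ_arc_short x y : 0 < cdist x y <= n -> circ_arc x y.
Proof. by rewrite /circ_arc => xy_le; case: (x < n) => /=; lia. Qed.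

Section Connectivity.
Variable S : {set vertex}.
Hypothesis S_lt : #|S| < n.
Local Notation D := (delete_rel edge S).

Lemma exists_hub_notin s : exists p, inl (s, p) \notin S.
Proof.
apply: exists_notin => [p q [->] // | ].
by rewrite card_prod card_bool card_ord; apply: leq_trans S_lt _; lia.
Qed.

Lemma exists_bridge_notin s : exists i, inr (inl (s, i)) \notin S.
Proof.
apply: exists_notin => [p q [->] // | ].
by rewrite card_ord; apply: leq_trans S_lt _; lia.
Qed.

Lemma connect_hub_cross s s' p q : s != s' ->
  inl (s, p) \notin S -> inl (s', q) \notin S -> connect D (inl (s, p)) (inl (s', q)).
Proof.
move=> ss' pS qS; have [i iS] := exists_bridge_notin s.
have pi : edge (inl (s, p)) (inr (inl (s, i))) by case: (s) (p) => [] [].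
have iq : edge (inr (inl (s, i))) (inl (s', q)) by move: ss'; case: (s) (s') (q) => [] [] [].
exact: connect_trans (connect1_delete pi pS iS) (connect1_delete iq iS qS).
Qed.

Lemma connect_hub a a' : inl a \notin S -> inl a' \notin S -> connect D (inl a) (inl a').
Proof.
case: a a' => [s p] [s' q].
have [<- pS qS | ss'] := eqVneq s s'; last exact: connect_hub_cross.
have [r rS] := exists_hub_notin (~~ s).
have s_ns : s != ~~ s by case: (s).
have ns_s : ~~ s != s by case: (s).
exact: connect_trans (connect_hub_cross s_ns pS rS) (connect_hub_cross ns_s rS qS).
Qed.

Lemma connect_cyc t x y :
  inr (inr (inl (t, x))) \notin S -> inr (inr (inl (t, y))) \notin S ->
  connect D (inr (inr (inl (t, x)))) (inr (inr (inl (t, y)))).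
Proof.
pose f (x : 'I_(4 * n).+1) : vertex := inr (inr (inl (t, x))).
have f_inj : injective f by move=> u v [].
have f_arc u v : 0 < cdist u v <= n -> edge (f u) (f v).
  by move=> uv; rewrite /= eqxx circ_arc_short.
exact: connect_circulant f_inj S_lt f_arc x y.
Qed.

Lemma connect_to_hub z : z \notin S -> exists2 a, inl a \notin S & connect D z (inl a).
Proof.
case: z => [a | [[s i] | [[t x] | []]]] zS; first by exists a.
- have [p pS] := exists_hub_notin (~~ s).
  by exists (~~ s, p) => //; apply: connect1_delete => //=; case: (s) (p) => [] [].
- have [j /andP[jS aS]] : exists j : 'I_n,
      (inr (inr (inl (t, cyc_exit j))) \notin S) && (inl (false, (t, j)) \notin S).
    apply: exists_notin2; last by rewrite card_ord.
    + by move=> i j [] /val_inj.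
    + by move=> i j [->].
    + by [].
  exists (false, (t, j)) => //; apply: connect_trans (connect_cyc zS jS) _.
  by apply: connect1_delete => //=; rewrite !eqxx.
- have [p pS] := exists_hub_notin true.
  by exists (true, p) => //; apply: connect1_delete => //=; case: (p).
Qed.

Lemma connect_from_hub z : z \notin S -> exists2 a, inl a \notin S & connect D (inl a) z.
Proof.
case: z => [a | [[s i] | [[t x] | []]]] zS; first by exists a.
- have [p pS] := exists_hub_notin s.
  by exists (s, p) => //; apply: connect1_delete => //=; case: (s) (p) => [] [].
- have [j /andP[aS jS]] : exists j : 'I_n,
      (inl (true, (t, j)) \notin S) && (inr (inr (inl (t, cyc_entry j))) \notin S).
    apply: exists_notin2; last by rewrite card_ord.
    + by move=> i j [->].
    + by move=> i j [] /eqP; rewrite eqn_add2r => /eqP /val_inj.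
    + by [].
  exists (true, (t, j)) => //; apply: connect_trans _ (connect_cyc jS zS).
  by apply: connect1_delete => //=; rewrite !eqxx.
- have [p pS] := exists_hub_notin false.
  by exists (false, p) => //; apply: connect1_delete.
Qed.

End Connectivity.

Lemma edge_strongly_connected : 0 < n -> strongly_k_connected edge n.
Proof.
move=> n_gt0; split=> [|S S_lt x y xS yS]; first by rewrite card_vertex //; lia.
have [a aS xa] := connect_to_hub S_lt xS; have [a' a'S a'y] := connect_from_hub S_lt yS.
exact: connect_trans xa (connect_trans (connect_hub S_lt aS a'S) a'y).
Qed.

Definition component (r : bridge + (cyc + unit)) : bridge + (bool + unit) :=
  match r with
  | inl b => inl b
  | inr (inl (t, _)) => inr (inl t)
  | inr (inr u) => inr (inr u)
  end.

Lemma edge_not_hamiltonian : 0 < n -> ~ hamiltonian edge.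
Proof.
move=> n_gt0 ham; have : #|{: bridge + (bool + unit)}| <= #|{: hub}|.
  apply: (hamiltonian_card_classes (cls := component)) ham.
  - by case=> [[s i] | [[t x] | []]] [[s' i'] | [[t' y] | []]] //= /andP[/eqP-> _].
  - case=> [b | [t | []]]; first by exists (inl b).
      by exists (inr (inl (t, ord0))).
    by exists (inr (inr tt)).
  - by rewrite !card_prod card_bool card_ord; lia.
by rewrite !card_sum !card_prod card_unit card_bool !card_ord; lia.
Qed.

End Construction.

Theorem proposition7p2 (n : nat) :
  exists e : rel 'I_(16 * n + 1),
    [/\ oriented e, regular e (2 * n), strongly_k_connected e n
      & ~ hamiltonian e].
Proof.
have [-> | n_gt0] := posnP n.
  exists (fun _ _ => false); split=> //.
  - by move=> x; rewrite /outdeg /indeg cards0.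
  - by split=> [|S]; rewrite ?card_ord ?ltn0.
  - by case=> -[|x c] [_ /(_ ord0) //]; case: c.
pose f (i : 'I_(16 * n + 1)) := enum_val (cast_ord (esym (card_vertex n_gt0)) i).
have f_bij : bijective f.
  exists (fun x => cast_ord (card_vertex n_gt0) (enum_rank x)) => [i | x].
    by rewrite /f enum_valK cast_ordKV.
  by rewrite /f cast_ordK enum_rankK.
exists (relpre f (@edge n)); split.
- exact/oriented_relpre/edge_oriented.
- exact/(regular_relpre f_bij)/edge_regular.
- exact/(strongly_k_connected_relpre f_bij)/edge_strongly_connected.
- by move/(hamiltonian_relpre f_bij); apply: edge_not_hamiltonian.
Qed.
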